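(* Let $k\ge 2$, let $H_0$ be a finite $k$-uniform hypergraph and let $(H_t)_{t\ge0}$ be the ILTH hypergraphs generated from $H_0$. If $H_0$ contains a motif of type $i\in\{13,14,15,24,25\}$ that contains $m$ vertices, then motifs of type $i$ occur at least $(m+1)^t$ times in $H_t$, for every $t\ge0$.
   Context: A $k$-uniform hypergraph has every hyperedge a $k$-element subset of the vertex set. The ILTH process: given $H_t$, form $H_{t+1}$ by adding for each vertex $x\in V(H_t)$ a new vertex $x'$ (its clone), and taking $E(H_{t+1})=E(H_t)\cup\{(e\setminus\{x\})\cup\{x'\} : e\in E(H_t),\ x\in e\}$. A motif consists of three distinct hyperedges $e_1,e_2,e_3$; the vertices it contains are those of $e_1\cup e_2\cup e_3$. Its type is the binary string $i_1\dots i_7$ where $i_j=1$ iff the $j$-th of the regions $e_1\setminus(e_2\cup e_3)$, $e_2\setminus(e_1\cup e_3)$, $e_3\setminus(e_1\cup e_2)$, $(e_1\cap e_2)\setminus e_3$, $(e_2\cap e_3)\setminus e_1$, $(e_1\cap e_3)\setminus e_2$, $e_1\cap e_2\cap e_3$ is nonempty, up to relabelling of $e_1,e_2,e_3$. The types are: type 13 $=0001111$, type 14 $=1001111$, type 15 $=1011111$, type 24 $=1001110$, type 25 $=1011110$. *)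

From mathcomp Require Import all_boot.
Set Implicit Arguments. Unset Strict Implicit. Unset Printing Implicit Defensive.

Definition uniform (V : finType) (k : nat) (E : {set {set V}}) : Prop :=
  forall e, e \in E -> #|e| = k.

(* Vertex type of H_t: V_{t+1} = V_t + V_t, inl x = old vertex x,
   inr x = clone x' of x. *)
Fixpoint ilth_vert (V : finType) (t : nat) : finType :=
  if t is t'.+1 then ((ilth_vert V t' + ilth_vert V t')%type : finType) else V.

Definition ilth_step (V : finType) (E : {set {set V}}) : {set {set (V + V)%type}} :=
  [set [set (@inl V V) y | y in e] | e : {set V} in E] :|:
  [set [set (@inl V V) y | y in e :\ x] :|: [set (@inr V V) x] | e : {set V} in E, x : V in e].

Fixpoint ilth (V : finType) (H0 : {set {set V}}) (t : nat) : {set {set ilth_vert V t}} :=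
  match t return {set {set ilth_vert V t}} with
  | 0 => H0
  | t'.+1 => ilth_step (ilth H0 t')
  end.

(* The 7 regions of an ordered triple of hyperedges, and the nonemptiness
   pattern i_1 ... i_7. *)
Definition regions (V : finType) (e1 e2 e3 : {set V}) : seq {set V} :=
  [:: e1 :\: (e2 :|: e3); e2 :\: (e1 :|: e3); e3 :\: (e1 :|: e2);
      (e1 :&: e2) :\: e3; (e2 :&: e3) :\: e1; (e1 :&: e3) :\: e2;
      e1 :&: e2 :&: e3].

Definition pattern (V : finType) (e1 e2 e3 : {set V}) : seq bool :=
  [seq A != set0 | A <- regions e1 e2 e3].

Definition type_code (i : nat) : seq bool :=
  match i with
  | 13 => [:: false; false; false; true; true; true; true]
  | 14 => [:: true; false; false; true; true; true; true]
  | 15 => [:: true; false; true; true; true; true; true]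
  | 24 => [:: true; false; false; true; true; true; false]
  | 25 => [:: true; false; true; true; true; true; false]
  | _ => [::]
  end.

Definition motif_of_type (V : finType) (M : {set {set V}}) (i : nat) : bool :=
  [exists e1 : {set V}, exists e2 : {set V}, exists e3 : {set V},
     [&& M == [set e1; e2; e3], e1 != e2, e2 != e3, e1 != e3 &
         pattern e1 e2 e3 == type_code i]].

Definition motif_vertices (V : finType) (M : {set {set V}}) : {set V} :=
  \bigcup_(e in M) e.

Definition motif_count (V : finType) (E : {set {set V}}) (i : nat) : nat :=
  #|[set M : {set {set V}} | (M \subset E) && (#|M| == 3) &
       motif_of_type M i]|.

From mathcomp Require Import all_boot.
Set Implicit Arguments. Unset Strict Implicit. Unset Printing Implicit Defensive.

(* Motifs survive an ILTH step in m + 1 ways: keep every vertex, or replace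
   one vertex a of the motif by its clone a' in all hyperedges containing a.
   Each choice is an injective relabelling of the vertices mapping hyperedges
   to hyperedges, so it preserves the region pattern and the vertex count;
   the copies are pairwise distinct, and copies of distinct motifs are
   distinct since forgetting clones recovers the original motif. Iterating
   gives (m + 1)^t motifs at time t. Neither uniformity nor the particular
   type plays any role. *)

Lemma imsetD_inj (T U : finType) (f : T -> U) (A B : {set T}) :
  injective f -> f @: (A :\: B) = f @: A :\: f @: B.
Proof.
move=> f_inj; apply/setP => z; rewrite inE.
have [/imsetP[y Ay ->]|nAz] := boolP (z \in f @: A).
  by rewrite !mem_imset // inE Ay andbT.
by rewrite andbF; apply/negbTE; apply: contra nAz; apply/subsetP/imsetS/subsetDl.
Qed.

Lemma pattern_imset (T U : finType) (f : T -> U) (e1 e2 e3 : {set T}) :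
  injective f -> pattern (f @: e1) (f @: e2) (f @: e3) = pattern e1 e2 e3.
Proof.
move=> f_inj; have fI (A B : {set T}) : f @: (A :&: B) = f @: A :&: f @: B.
  exact: imsetI (in2W f_inj).
by rewrite /pattern /regions /= -!imsetU -!fI -!(imsetD_inj _ _ f_inj) !imset_eq0.
Qed.

Lemma motif_of_type_imset (T U : finType) (f : T -> U) (M : {set {set T}}) i :
  injective f -> motif_of_type M i -> motif_of_type [set f @: e | e : {set T} in M] i.
Proof.
move=> f_inj /existsP[e1 /existsP[e2 /existsP[e3]]].
case/and5P=> /eqP-> ne12 ne23 ne13 /eqP type_e.
apply/existsP; exists (f @: e1); apply/existsP; exists (f @: e2).
apply/existsP; exists (f @: e3).
have /inj_eq fe_inj := imset_inj f_inj.
rewrite ?imsetU ?imsetU1 ?imset_set1 eqxx !fe_inj ne12 ne23 ne13.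
by rewrite pattern_imset // type_e eqxx.
Qed.

Lemma motif_vertices_imset (T U : finType) (f : T -> U) (M : {set {set T}}) :
  motif_vertices [set f @: e | e : {set T} in M] = f @: motif_vertices M.
Proof.
apply/setP => z; apply/bigcupP/imsetP.
  case=> _ /imsetP[e eM ->] /imsetP[y ye ->].
  by exists y => //; apply/bigcupP; exists e.
case=> y /bigcupP[e eM ye] ->.
by exists (f @: e); apply: imset_f.
Qed.

Lemma card_fibres_ge (T U : finType) (g : U -> T) (A : {set U}) (S : {set T}) n :
  {in S, forall M, n <= #|[set N in A | g N == M]|} -> n * #|S| <= #|A|.
Proof.
move=> fibre_ge.
have -> : #|A| = \sum_(M in S) #|[set N in A | g N == M]| + #|[set N in A | g N \notin S]|.
  rewrite -sum1_card (bigID (fun N => g N \in S)) /=.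
  rewrite (partition_big g (mem S)) => [|N /andP[]//]; congr (_ + _).
  - apply: eq_bigr => M SM; rewrite -sum1_card; apply: eq_bigl => N.
    by rewrite inE -andbA; case: eqP => [->|_]; rewrite ?andbF // (SM : M \in S).
  - by rewrite -sum1_card; apply: eq_bigl => N; rewrite inE.
rewrite mulnC -sum_nat_const; apply: leq_trans (leq_addr _ _).
exact: leq_sum.
Qed.

Section Cloning.

Variable W : finType.

Definition clone_at (x : option W) (y : W) : (W + W)%type :=
  if x is Some a then (if y == a then inr a else inl y) else inl y.

Definition forget_clone (z : (W + W)%type) : W :=
  match z with inl y => y | inr y => y end.

Lemma clone_atK x : cancel (clone_at x) forget_clone.
Proof. by case: x => [a|] y //=; case: eqP => [->|]. Qed.

Lemma clone_at_inj x : injective (clone_at x).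
Proof. exact: can_inj (clone_atK x). Qed.

Lemma inr_in_clone_at x a (A : {set W}) :
  (inr a \in clone_at x @: A) = (x == Some a) && (a \in A).
Proof.
apply/imsetP/andP => [[y Ay]|[/eqP-> Aa]]; last by exists a; rewrite //= eqxx.
by case: x => [b|] //=; case: eqP => // yb [ab]; rewrite ab -yb eqxx.
Qed.

Lemma clone_at_edge x (E : {set {set W}}) e :
  e \in E -> clone_at x @: e \in ilth_step E.
Proof.
move=> Ee; rewrite inE; case: x => [a|]; last by rewrite imset_f.
have [ea|nea] := boolP (a \in e); apply/orP; [right|left].
  have -> : clone_at (Some a) @: e = [set inl y | y in e :\ a] :|: [set inr a].
    rewrite -{1}(setD1K ea) imsetU1 /= eqxx setUC; congr (_ :|: _).
    by apply: eq_in_imset => y; rewrite !inE /= => /andP[/negbTE->].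
  exact: (imset2_f (fun (e : {set W}) a => [set inl y | y in e :\ a] :|: [set inr a])).
have -> : clone_at (Some a) @: e = [set inl y | y in e].
  by apply: eq_in_imset => y ey /=; case: eqP => // ya; rewrite -ya ey in nea.
exact: imset_f.
Qed.

Definition clone_motif x (M : {set {set W}}) : {set {set (W + W)%type}} :=
  [set clone_at x @: e | e : {set W} in M].

Definition forget_clone_motif (N : {set {set (W + W)%type}}) : {set {set W}} :=
  [set forget_clone @: e | e : {set (W + W)%type} in N].

Lemma clone_motifK x : cancel (clone_motif x) forget_clone_motif.
Proof.
move=> M; rewrite /forget_clone_motif -imset_comp -[RHS]imset_id.
apply: eq_imset => e /=; rewrite -imset_comp -[RHS]imset_id.
by apply: eq_imset => y /=; rewrite clone_atK.
Qed.

Definition clone_choices (M : {set {set W}}) : {set option W} :=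
  None |: [set Some a | a in motif_vertices M].

Lemma card_clone_choices M : #|clone_choices M| = #|motif_vertices M| + 1.
Proof.
rewrite cardsU1 card_imset; last exact: Some_inj.
have -> : None \notin [set Some a | a in motif_vertices M] by apply/imsetP => -[].
by rewrite addnC.
Qed.

(* [x] is recovered from [clone_motif x M]: it is [Some a] iff the clone of [a]
   is a vertex of it. *)
Lemma clone_motif_inj M : {in clone_choices M &, injective (clone_motif ^~ M)}.
Proof.
have clone_vertices x : motif_vertices (clone_motif x M) = clone_at x @: motif_vertices M.
  exact: motif_vertices_imset.
have cloned_at a y : a \in motif_vertices M ->
    clone_motif (Some a) M = clone_motif y M -> y = Some a.
  move=> Ma eqM; have : inr a \in motif_vertices (clone_motif (Some a) M).
    by rewrite clone_vertices inr_in_clone_at eqxx.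
  by rewrite eqM clone_vertices inr_in_clone_at => /andP[/eqP].
have vertex_of a : Some a \in clone_choices M -> a \in motif_vertices M.
  by rewrite !inE /= (mem_imset _ _ Some_inj).
move=> [a|] [b|] Mx My eqM //.
- by rewrite (cloned_at a _ (vertex_of a Mx) eqM).
- by have := cloned_at a _ (vertex_of a Mx) eqM.
- by have := cloned_at b _ (vertex_of b My) (esym eqM).
Qed.

End Cloning.

Definition motifs_with (V : finType) (i m : nat) (E : {set {set V}}) :
    {set {set {set V}}} :=
  [set M : {set {set V}} |
     [&& M \subset E, #|M| == 3, motif_of_type M i & #|motif_vertices M| == m]].

Lemma clone_motif_step (W : finType) (i m : nat) (E : {set {set W}}) x M :
  M \in motifs_with i m E -> clone_motif x M \in motifs_with i m (ilth_step E).
Proof.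
rewrite !inE => /and4P[/subsetP ME /eqP card_M type_M /eqP card_VM].
have cl_inj : injective (clone_at x) by exact: clone_at_inj.
apply/and4P; split.
- by apply/subsetP => _ /imsetP[e eM ->]; exact/clone_at_edge/ME.
- by rewrite card_imset ?card_M //; exact: imset_inj.
- exact: motif_of_type_imset.
- by rewrite motif_vertices_imset card_imset ?card_VM.
Qed.

Lemma card_motifs_with_step (W : finType) (i m : nat) (E : {set {set W}}) :
  (m + 1) * #|motifs_with i m E| <= #|motifs_with i m (ilth_step E)|.
Proof.
apply: (card_fibres_ge (g := @forget_clone_motif W)) => M EM.
have clones_sub : [set clone_motif x M | x in clone_choices M]
    \subset [set N in motifs_with i m (ilth_step E) | forget_clone_motif N == M].
  apply/subsetP => _ /imsetP[x _ ->].
  by rewrite inE clone_motif_step // clone_motifK eqxx.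
apply: leq_trans (subset_leq_card clones_sub).
rewrite card_in_imset ?card_clone_choices; last exact: clone_motif_inj.
by move: EM; rewrite inE => /and4P[_ _ _ /eqP->].
Qed.

Lemma card_motifs_with_ilth (V : finType) (i m : nat) (H0 : {set {set V}}) t :
  (m + 1) ^ t * #|motifs_with i m H0| <= #|motifs_with i m (ilth H0 t)|.
Proof.
elim: t => [|t IHt]; first by rewrite mul1n.
rewrite expnS -mulnA; apply: leq_trans (card_motifs_with_step _ _ _).
by rewrite leq_mul2l IHt orbT.
Qed.

Lemma motifs_with_count (V : finType) (i m : nat) (E : {set {set V}}) :
  #|motifs_with i m E| <= motif_count E i.
Proof.
apply/subset_leq_card/subsetP => M; rewrite !inE.
by case/and4P=> -> -> -> _.
Qed.

Theorem theorem3p5 (k : nat) (V : finType) (H0 : {set {set V}}) (i m : nat) :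
  2 <= k -> uniform k H0 -> i \in [:: 13; 14; 15; 24; 25] ->
  (exists M : {set {set V}},
     [/\ M \subset H0, #|M| = 3, motif_of_type M i & #|motif_vertices M| = m]) ->
  forall t : nat, (m + 1) ^ t <= motif_count (ilth H0 t) i.
Proof.
move=> _ _ _ [M [H0M card_M type_M card_VM]] t.
have H0_motif : M \in motifs_with i m H0 by rewrite inE H0M card_M type_M card_VM !eqxx.
apply: leq_trans (motifs_with_count _ _ _).
apply: leq_trans (card_motifs_with_ilth i m H0 t).
by rewrite leq_pmulr // card_gt0; apply/set0Pn; exists M.
Qed.
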